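(* The network simplex algorithm applied to the transformed problem, starting from a feasible basis structure and performing simplex pivots until no entering edge exists, performs $\mathcal{O}(nm\,\mathcal{U}\mathcal{B}\log(m\mathcal{C}\mathcal{U}\mathcal{B}))$ non-degenerate simplex pivots in total when the entering edge is always chosen by Dantzig's pivoting rule. Here $n=|V|$, $m=|E|$, $\mathcal{C}=\max_e|c_e|$, $\mathcal{U}=\max_eu_e$, $\mathcal{B}=\max_eb_e$.
   Context: Problem: directed multigraph $G=(V,E)$, capacities $u_e\in\mathbb{N}_{\ge0}$, costs $c_e\in\mathbb{Z}$, usage fees $b_e\in\mathbb{N}_{\ge0}$, budget $B\in\mathbb{N}_{\ge0}$; a feasible flow is $x\in\mathbb{R}^E$ with flow conservation at every node and $0\le x\le u$; minimize $c(x)=\sum_ec_ex_e$ subject to $b(x)=\sum_eb_ex_e\le B$. The transformed problem uses budget $B'=B+\tfrac12$. Standing assumptions: $G$ strongly connected; some flow minimizing $c$ over all feasible flows has $b(x)\ge B+1$. Basis structure: tuple $(L,T,U,\bar e)$, $\bar e\in E$, $L,T,U$ a partition of $E\setminus\{\bar e\}$, $T$ a spanning tree of the underlying undirected graph. For $f\notin T$, $C(f)$ is the unique cycle in $T\cup\{f\}$ oriented along $f$, forward edges $C^+(f)$, backward edges $C^-(f)$; $\chi(C)$ is $+1$ on $C^+$, $-1$ on $C^-$, $0$ elsewhere. Required: $\sum_{C^+(\bar e)}b-\sum_{C^-(\bar e)}b\neq0$. Basic solution: unique $x$ with flow conservation, $x=0$ on $L$, $x=u$ on $U$, $b(x)=B'$;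 feasible if $0\le x\le u$. Node potentials: for a fixed root $v_r$, $\pi,\mu$ unique with $\pi_{v_r}=\mu_{v_r}=0$ and $c^\pi_g:=c_g-\pi_v+\pi_w=0$, $b^\mu_g:=b_g-\mu_v+\mu_w=0$ for $g=(v,w)\in T$ (same formulas on all edges). Reduced costs $d_g:=c^\pi_g-c^\pi_{\bar e}\,b^\mu_g/b^\mu_{\bar e}$. Entering edge: $e\in L$ with $d_e<0$ or $e\in U$ with $d_e>0$. Dantzig's pivoting rule: choose an entering edge maximizing $|d_e|$ among all entering edges. Simplex pivot with entering edge $e$: $\sigma=1$ if $e\in L$, $\sigma=-1$ if $e\in U$; $\theta=\sigma(\chi(C(e))-\frac{b^\mu_e}{b^\mu_{\bar e}}\chi(C(\bar e)))$; $\delta_f=-x_f/\theta_f$ if $\theta_f<0$, $(u_f-x_f)/\theta_f$ if $\theta_f>0$, $+\infty$ otherwise; $\delta=\min_f\delta_f$, $x'=x+\delta\theta$; leaving edge: any $e'$ with $\delta_{e'}=\delta$. New tuple: if $e'=e$, move $e$ between $L$ and $U$; if $e'=\bar e$, $T'=T$, $\bar e'=e$, $e$ removed from $L$ or $U$, $\bar e$ put into $L'$ if $x'_{\bar e}=0$ else into $U'$; otherwise $e$ removed from $L$ or $U$, $e'$ put into $L'$ if $x'_{e'}=0$ else $U'$, and $T'=T\cup\{e\}\setminus\{e'\}$, $\bar e'=\bar e$ if this is a spanning tree, else $T'=T\cup\{\bar e\}\setminus\{e'\}$, $\bar e'=e$. The pivot is non-degenerate if $\delta>0$. *)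

From HB Require Import structures.
From mathcomp Require Import all_boot all_order all_algebra.
Set Implicit Arguments. Unset Strict Implicit. Unset Printing Implicit Defensive.
Import Order.TTheory GRing.Theory Num.Theory.

Record net (V E : finType) := Net {
  src : E -> V; tgt : E -> V;
  cap : E -> nat;
  cst : E -> int;
  fee : E -> nat;
  bud : nat
}.

Record bstruct (E : finType) := BS {
  bsL : {set E}; bsT : {set E}; bsU : {set E}; bsbar : E }.

Section Defs.
Variables (V E : finType) (N : net V E).

Definition n_of := #|V|.
Definition m_of := #|E|.
Definition Cmax := (\max_(e : E) absz (cst N e))%N.
Definition Umax := (\max_(e : E) cap N e)%N.
Definition Bmax := (\max_(e : E) fee N e)%N.

Definition arc_rel : rel V := [rel v w | [exists e, (src N e == v) && (tgt N e == w)]].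
Definition strongly_connected := forall v w : V, connect arc_rel v w.

Definition urel (T : {set E}) : rel V :=
  [rel v w | [exists e in T, ((src N e == v) && (tgt N e == w))
                         || ((src N e == w) && (tgt N e == v))]].

Definition spanning_tree (T : {set E}) : bool :=
  [forall v, forall w, connect (urel T) v w] && (#|T| == #|V|.-1)%N.

Local Open Scope ring_scope.
Variable R : realFieldType.

Definition conservation (x : E -> R) :=
  forall v : V, \sum_(g | tgt N g == v) x g = \sum_(g | src N g == v) x g.

Definition feasible_flow (x : E -> R) :=
  conservation x /\ forall e, 0 <= x e <= (cap N e)%:R.

Definition cost (x : E -> R) : R := \sum_e (cst N e)%:~R * x e.
Definition usage (x : E -> R) : R := \sum_e (fee N e)%:R * x e.

(* chi(C(f)) for f not in T: the incidence vector of the unique cycle in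
   T + f oriented along f, characterized as the unique circulation supported
   on T + f taking value 1 on f. *)
Definition is_cycvec (T : {set E}) (f : E) (z : E -> R) :=
  [/\ conservation z, z f = 1 & forall g, g \notin T -> g != f -> z g = 0].

Definition is_basis (S : bstruct E) :=
  let: BS L T U eb := S in
  [/\ eb \notin L :|: T :|: U,
      [&& [disjoint L & T], [disjoint L & U] & [disjoint T & U]],
      L :|: T :|: U = [set: E] :\ eb,
      spanning_tree T &
      exists z, is_cycvec T eb z /\ \sum_e z e * (fee N e)%:R != 0].

(* basic solution w.r.t. the transformed budget B' = B + 1/2 *)
Definition basic_sol (S : bstruct E) (x : E -> R) :=
  [/\ conservation x,
      forall f, f \in bsL S -> x f = 0,
      forall f, f \in bsU S -> x f = (cap N f)%:R &
      usage x = (bud N)%:R + 2%:R^-1].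

Definition feasible_basis (S : bstruct E) :=
  is_basis S /\ exists x, basic_sol S x /\ forall e, 0 <= x e <= (cap N e)%:R.

Definition cpi (pi : V -> R) (g : E) : R := (cst N g)%:~R - pi (src N g) + pi (tgt N g).
Definition bmu (mu : V -> R) (g : E) : R := (fee N g)%:R - mu (src N g) + mu (tgt N g).

Definition potentials (vr : V) (S : bstruct E) (pi mu : V -> R) :=
  [/\ pi vr = 0, mu vr = 0 &
      forall g, g \in bsT S -> cpi pi g = 0 /\ bmu mu g = 0].

Definition redcost (S : bstruct E) (pi mu : V -> R) (g : E) : R :=
  cpi pi g - cpi pi (bsbar S) * bmu mu g / bmu mu (bsbar S).

Definition entering (S : bstruct E) (pi mu : V -> R) (e : E) :=
  (e \in bsL S /\ redcost S pi mu e < 0) \/ (e \in bsU S /\ redcost S pi mu e > 0).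

(* delta_f (only used when theta_f <> 0) *)
Definition delta_f (x theta : E -> R) (f : E) : R :=
  if theta f < 0 then - x f / theta f else ((cap N f)%:R - x f) / theta f.

Definition new_tuple (S : bstruct E) (e e' : E) (x' : E -> R) (S' : bstruct E) :=
  let: BS L T U eb := S in
  if e' == e then
    (if e \in L then S' = BS (L :\ e) T (e |: U) eb
     else S' = BS (e |: L) T (U :\ e) eb)
  else if e' == eb then
    S' = BS (if x' eb == 0 then eb |: (L :\ e) else L :\ e) T
            (if x' eb == 0 then U :\ e else eb |: (U :\ e)) e
  else
    let L' := if x' e' == 0 then e' |: (L :\ e) else L :\ e in
    let U' := if x' e' == 0 then U :\ e else e' |: (U :\ e) in
    (spanning_tree ((e |: T) :\ e') /\ S' = BS L' ((e |: T) :\ e') U' eb)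
    \/ (~~ spanning_tree ((e |: T) :\ e') /\ S' = BS L' ((eb |: T) :\ e') U' e).

Definition dantzig_pivot (vr : V) (S S' : bstruct E) (nd : bool) :=
  is_basis S /\
  exists (pi mu : V -> R) (x ze zb : E -> R) (e e' : E),
  [/\ [/\ potentials vr S pi mu, basic_sol S x,
      is_cycvec (bsT S) e ze & is_cycvec (bsT S) (bsbar S) zb],
      entering S pi mu e,
      (forall f, entering S pi mu f ->
         `|redcost S pi mu f| <= `|redcost S pi mu e|) &
      let sigma : R := if e \in bsL S then 1 else -1 in
      let theta f := sigma * (ze f - bmu mu e / bmu mu (bsbar S) * zb f) in
      [/\ theta e' != 0,
          (forall f, theta f != 0 -> delta_f x theta e' <= delta_f x theta f),
          new_tuple S e e' (fun f => x f + delta_f x theta e' * theta f) S' &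
          nd = (0 < delta_f x theta e')]].

Definition terminal (vr : V) (S : bstruct E) :=
  is_basis S /\ exists pi mu : V -> R,
    potentials vr S pi mu /\ forall e, ~ entering S pi mu e.

Definition dantzig_run (vr : V) (k : nat) (Ss : nat -> bstruct E) (nd : nat -> bool) :=
  [/\ feasible_basis (Ss 0%N),
      forall i, (i < k)%N -> dantzig_pivot vr (Ss i) (Ss i.+1) (nd i) &
      terminal vr (Ss k)].

End Defs.

From mathcomp Require Import all_boot all_order all_algebra.
From mathcomp Require Import ring lra zify.
Import Order.TTheory GRing.Theory Num.Theory.
Set Implicit Arguments. Unset Strict Implicit. Unset Printing Implicit Defensive.

(* A non-degenerate pivot with entering edge [e] and step length [delta] lowers
   the cost by [delta * |d e|].  Cycle vectors of a spanning tree have entries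
   in {-1, 0, 1}, and the half-integral budget [B + 1/2] makes
   [2 * bmu eb * x] integral for every basic solution [x]; hence
   [|d e| >= 1/(n B)] and [delta >= 1/(4 n B)], so every non-degenerate pivot
   gains at least [1/(4 n^2 B^2)].  Dantzig's rule bounds every reduced cost by
   [|d e|], so no feasible flow of usage [B + 1/2] is cheaper than the current
   one by more than [m U |d e| <= 4 n m U B * gain].  The gap to the final basic
   solution, at most [2 m C U] initially, therefore shrinks by a factor
   [1 - 1/(4 n m U B)] per non-degenerate pivot and stays above [1/(4 n^2 B^2)]
   until the last one, which bounds their number by
   [4 n m U B * 8 * up_log 2 (m C U B)]. *)

Section SpanningTree.
Variables (V E : finType) (N : net V E).

Lemma urel_sym (T : {set E}) : symmetric (urel N T).
Proof.
move=> u w /=; apply/existsP/existsP => -[h /andP[hT hh]]; exists h;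
  by rewrite hT /= orbC.
Qed.

Section ConnectedCard.
Variables (F : {set E}) (r : V).
Hypothesis connF : forall v, connect (urel N F) r v.

Definition reachable_in (v : V) (k : nat) :=
  [exists p : k.-tuple V, path (urel N F) r p && (last r p == v)].

Lemma exists_reachable_in v : exists k, reachable_in v k.
Proof.
have /connectP[p pp pv] := connF v.
by exists (size p); apply/existsP; exists (in_tuple p); rewrite pp -pv eqxx.
Qed.

Definition depth v := ex_minn (exists_reachable_in v).

Lemma depth_min v k : reachable_in v k -> (depth v <= k)%N.
Proof. by rewrite /depth; case: ex_minnP => j _; apply. Qed.

Lemma depth_parent v : v != r -> exists2 u, urel N F u v & (depth u < depth v)%N.
Proof.
move=> vr; rewrite {2}/depth; case: ex_minnP => k /existsP[p /andP[pp /eqP pv]] _.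
have := size_tuple p; move: pp pv; case/lastP: (tval p) => [_ pv|q u].
  by rewrite -pv eqxx in vr.
rewrite rcons_path last_rcons size_rcons => /andP[pq qu] uv <-.
exists (last r q); first by rewrite -uv.
by rewrite ltnS depth_min //; apply/existsP; exists (in_tuple q); rewrite pq eqxx.
Qed.

Definition parent_edge_of (v : V) (h : E) :=
  ((tgt N h == v) && (depth (src N h) < depth v)%N)
  || ((src N h == v) && (depth (tgt N h) < depth v)%N).

Definition parent_edge v := [pick h in F | parent_edge_of v h].

Lemma parent_edgeP v : v != r ->
  exists2 h, h \in F & parent_edge v = Some h /\ parent_edge_of v h.
Proof.
move=> vr; rewrite /parent_edge; case: pickP => [h /andP[hF hv]|none].
  by exists h.
have [u /existsP[h /andP[hF hh]] du] := depth_parent vr.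
have := none h; rewrite hF /parent_edge_of.
by case/orP: hh => /andP[/eqP-> /eqP->]; rewrite du eqxx ?orbT.
Qed.

(* A parent edge determines its child: it is the endpoint of larger depth. *)
Lemma parent_edge_inj : {in [set~ r] &, injective parent_edge}.
Proof.
move=> v1 v2; rewrite !inE => v1r v2r.
have [h1 _ [-> c1]] := parent_edgeP v1r; have [h2 _ [-> c2]] := parent_edgeP v2r.
case=> eh; subst h2; move: c1 c2; rewrite /parent_edge_of.
case/orP=> /andP[/eqP e1 d1]; case/orP=> /andP[/eqP e2 d2];
  rewrite -e1 -e2 // in d1 d2 *; by have := ltn_trans d1 d2; rewrite ltnn.
Qed.

Lemma card_connected : (#|V| <= #|F|.+1)%N.
Proof.
have sub : parent_edge @: [set~ r] \subset Some @: F.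
  apply/subsetP => o /imsetP[v]; rewrite !inE => vr ->.
  by have [h hF [-> _]] := parent_edgeP vr; apply: imset_f.
move: (subset_leq_card sub); rewrite card_in_imset; last exact: parent_edge_inj.
by rewrite card_imset ?cardsC1; [lia | exact: Some_inj].
Qed.

End ConnectedCard.

(* [T :\ g] has too few edges to be connected; the component of [src g] in it
   is the cut. *)
Lemma spanning_tree_cut (T : {set E}) g : spanning_tree N T -> g \in T ->
  exists S : {set V}, forall h, h \in T ->
    ((src N h \in S) != (tgt N h \in S)) = (h == g).
Proof.
move=> /andP[/forallP conT /eqP cT] gT.
set F := T :\ g; have symF := urel_sym F.
have edgeF h : h \in T -> h != g -> urel N F (src N h) (tgt N h).
  by move=> hT hg; apply/existsP; exists h; rewrite !inE hg hT !eqxx.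
exists [set v | connect (urel N F) (src N g) v] => h hT; rewrite !inE.
case: (eqVneq h g) => [->|hg]; last first.
  suff -> : connect (urel N F) (src N g) (src N h) = connect (urel N F) (src N g) (tgt N h).
    by rewrite eqxx.
  apply/idP/idP => c.
    by apply: connect_trans c (connect1 (edgeF h hT hg)).
  by apply: connect_trans c _; rewrite (sym_connect_sym symF) connect1 ?edgeF.
rewrite connect0 /=; apply/negP => tg.
suff : (#|V| <= #|F|.+1)%N.
  have := cardsD1 g T; rewrite gT cT -/F.
  have : (0 < #|V|)%N by apply/card_gt0P; exists (src N g).
  lia.
apply: (@card_connected F (src N g)) => v.
apply: connect_sub (forallP (conT (src N g)) v) => u w /existsP[h' /andP[h'T hh']].
case: (eqVneq h' g) hh' => [->|h'g] hh'.
  by case/orP: hh' => /andP[/eqP <- /eqP <-] //; rewrite (sym_connect_sym symF).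
case/orP: hh' => /andP[/eqP <- /eqP <-]; last rewrite (sym_connect_sym symF);
  exact/connect1/edgeF.
Qed.

End SpanningTree.

Local Open Scope ring_scope.

Section IntegerValues.
Variable R : numDomainType.

Definition is_int (x : R) := exists z : int, x = z%:~R.
Definition is_sgn (x : R) := exists2 z : int, `|z| <= 1 & x = z%:~R.

Lemma is_int_intr (k : int) : is_int k%:~R. Proof. by exists k. Qed.
Lemma is_int_nat (k : nat) : is_int k%:R. Proof. by exists k%:Z; rewrite pmulrn. Qed.
Lemma is_int0 : is_int 0. Proof. by exists 0. Qed.
Lemma is_int1 : is_int 1. Proof. by exists 1. Qed.

Lemma is_intD x y : is_int x -> is_int y -> is_int (x + y).
Proof. by move=> [a ->] [b ->]; exists (a + b); rewrite intrD. Qed.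

Lemma is_intN x : is_int x -> is_int (- x).
Proof. by move=> [a ->]; exists (- a); rewrite intrN. Qed.

Lemma is_intB x y : is_int x -> is_int y -> is_int (x - y).
Proof. by move=> ? ?; apply/is_intD/is_intN. Qed.

Lemma is_intM x y : is_int x -> is_int y -> is_int (x * y).
Proof. by move=> [a ->] [b ->]; exists (a * b); rewrite intrM. Qed.

Lemma is_int_sum (I : finType) (P : pred I) (F : I -> R) :
  (forall i, P i -> is_int (F i)) -> is_int (\sum_(i | P i) F i).
Proof. by move=> FZ; apply: (big_ind is_int) => //; [apply: is_int0 | apply: is_intD]. Qed.

Lemma is_int_norm_ge1 x : is_int x -> x != 0 -> 1 <= `|x|.
Proof.
move=> [a ->]; rewrite intr_eq0 -intr_norm ler1z.
by case: a => [[|k]|k].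
Qed.

Lemma is_sgn_int x : is_sgn x -> is_int x. Proof. by move=> [a _ ->]; exists a. Qed.

Lemma is_sgn_norm_le1 x : is_sgn x -> `|x| <= 1.
Proof. by move=> [a a1 ->]; rewrite -intr_norm -[1]/(1%:~R) ler_int. Qed.

Lemma is_sgn0 : is_sgn 0. Proof. by exists 0. Qed.
Lemma is_sgn1 : is_sgn 1. Proof. by exists 1. Qed.

Lemma is_sgnN x : is_sgn x -> is_sgn (- x).
Proof. by move=> [a a1 ->]; exists (- a); rewrite ?normrN ?intrN. Qed.

Lemma is_sgnM x y : is_sgn x -> is_sgn y -> is_sgn (x * y).
Proof.
move=> [a a1 ->] [b b1 ->]; exists (a * b); last by rewrite intrM.
by rewrite normrM -[1]mulr1 ler_pM.
Qed.

End IntegerValues.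

Section Circulations.
Variables (R : realFieldType) (V E : finType) (N : net V E).
Implicit Types (x y z : E -> R) (T : {set E}) (S : {set V}).

Lemma conservationD x y : conservation N x -> conservation N y ->
  conservation N (fun g => x g + y g).
Proof. by move=> cx cy v; rewrite !big_split /= cx cy. Qed.

Lemma conservationZ (a : R) x : conservation N x -> conservation N (fun g => a * x g).
Proof. by move=> cx v; rewrite -!mulr_sumr cx. Qed.

Lemma conservationB x y : conservation N x -> conservation N y ->
  conservation N (fun g => x g - y g).
Proof.
move=> cx cy; apply: conservationD => // v.
by rewrite !sumrN (cy v).
Qed.

Lemma sum_circulation_potential (p : V -> R) z : conservation N z ->
  \sum_g z g * (p (tgt N g) - p (src N g)) = 0.
Proof.
move=> cz.
have split_nodes (h : E -> V) :
    \sum_g z g * p (h g) = \sum_v p v * \sum_(g | h g == v) z g.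
  rewrite (partition_big h predT) //=; apply: eq_bigr => v _.
  by rewrite mulr_sumr; apply: eq_bigr => g /eqP->; rewrite mulrC.
under eq_bigr do rewrite mulrBr.
rewrite sumrB !split_nodes; apply/eqP; rewrite subr_eq0.
by apply/eqP/eq_bigr => v _; rewrite cz.
Qed.

Lemma sum_circulation_reduced (w : E -> R) (p : V -> R) z : conservation N z ->
  \sum_g z g * (w g - p (src N g) + p (tgt N g)) = \sum_g z g * w g.
Proof.
move=> cz; under eq_bigr do rewrite -addrA mulrDr [- _ + _]addrC.
by rewrite big_split /= sum_circulation_potential // addr0.
Qed.

Definition cut_incidence S (h : E) : R := (tgt N h \in S)%:R - (src N h \in S)%:R.

Lemma is_sgn_cut_incidence S h : is_sgn (cut_incidence S h).
Proof.
exists ((tgt N h \in S)%:Z - (src N h \in S)%:Z); last by rewrite /cut_incidence intrB !pmulrn.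
by case: (tgt N h \in S); case: (src N h \in S).
Qed.

Lemma circulation_cut S z : conservation N z -> \sum_h z h * cut_incidence S h = 0.
Proof. exact: (sum_circulation_potential (fun v => (v \in S)%:R)). Qed.

Lemma tree_edge_flow T S g z :
  (forall h, h \in T -> ((src N h \in S) != (tgt N h \in S)) = (h == g)) ->
  g \in T -> conservation N z ->
  z g = - cut_incidence S g * \sum_(h | h \notin T) z h * cut_incidence S h.
Proof.
move=> cut gT cz; have := circulation_cut S cz.
rewrite (bigID (mem T)) /= (bigD1 g) //= big1 ?addr0; last first.
  move=> h /andP[hT hg]; have := cut h hT; rewrite (negbTE hg) /cut_incidence.
  by case: (src N h \in S); case: (tgt N h \in S) => // _; rewrite subrr mulr0.
have kg : cut_incidence S g * cut_incidence S g = 1.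
  have := cut g gT; rewrite eqxx /cut_incidence.
  by case: (src N g \in S); case: (tgt N g \in S) => // _;
    rewrite ?subr0 ?sub0r ?mulr1 ?mulrNN ?mulr1.
move/eqP; rewrite addr_eq0 => /eqP flow_g.
by rewrite mulNr -mulrN -flow_g mulrCA kg mulr1.
Qed.

Lemma circulation_tree0 T z : spanning_tree N T -> conservation N z ->
  (forall h, h \notin T -> z h = 0) -> forall g, z g = 0.
Proof.
move=> sT cz z0 g; have [gT|] := boolP (g \in T); last exact: z0.
have [S cut] := spanning_tree_cut sT gT.
by rewrite (tree_edge_flow cut gT cz) big1 ?mulr0 // => h hT; rewrite z0 // mul0r.
Qed.

Lemma circulation_tree_int T z : spanning_tree N T -> conservation N z ->
  (forall h, h \notin T -> is_int (z h)) -> forall g, is_int (z g).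
Proof.
move=> sT cz zZ g; have [gT|] := boolP (g \in T); last exact: zZ.
have [S cut] := spanning_tree_cut sT gT.
rewrite (tree_edge_flow cut gT cz); apply: is_intM.
  exact/is_intN/is_sgn_int/is_sgn_cut_incidence.
apply: is_int_sum => h hT.
by apply: is_intM; [apply: zZ | apply/is_sgn_int/is_sgn_cut_incidence].
Qed.

Lemma is_sgn_cycvec T f z : spanning_tree N T -> f \notin T ->
  is_cycvec N T f z -> forall g, is_sgn (z g).
Proof.
move=> sT fT [cz zf z0] g; have [gT|gT] := boolP (g \in T); last first.
  by have [->|gf] := eqVneq g f; rewrite ?zf ?z0 //; [apply: is_sgn1 | apply: is_sgn0].
have [S cut] := spanning_tree_cut sT gT.
rewrite (tree_edge_flow cut gT cz) (bigD1 f) //= big1 ?addr0; last first.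
  by move=> h /andP[hT hf]; rewrite z0 // mul0r.
by rewrite zf mul1r; apply/is_sgnM/is_sgn_cut_incidence/is_sgnN/is_sgn_cut_incidence.
Qed.

Lemma cycvec_sum T f z (F : E -> R) : is_cycvec N T f z ->
  (forall g, g \in T -> F g = 0) -> \sum_g z g * F g = F f.
Proof.
move=> [_ zf z0] F0; rewrite (bigD1 f) //= zf mul1r big1 ?addr0 // => g gf.
by have [gT|gT] := boolP (g \in T); [rewrite F0 ?mulr0 | rewrite z0 ?mul0r].
Qed.

Lemma norm_sum_support_le (A : {set E}) z (w : E -> R) (W : R) :
  (forall g, g \notin A -> z g = 0) -> (forall g, `|z g| <= 1) ->
  (forall g, `|w g| <= W) -> `|\sum_g z g * w g| <= #|A|%:R * W.
Proof.
move=> z0 z1 wW; rewrite (bigID (mem A)) /= [X in _ + X]big1 ?addr0; last first.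
  by move=> g gA; rewrite z0 // mul0r.
apply: le_trans (ler_norm_sum _ _ _) _.
rewrite -sum1_card natr_sum mulr_suml; apply: ler_sum => g _.
by rewrite mul1r normrM -[W]mul1r ler_pM.
Qed.

End Circulations.

Section Linearity.
Variables (R : realFieldType) (V E : finType) (N : net V E).
Implicit Types (x y : E -> R) (a : R).

Lemma eq_usage x y : x =1 y -> usage N x = usage N y.
Proof. by move=> xy; apply: eq_bigr => g _; rewrite xy. Qed.

Lemma eq_cost x y : x =1 y -> cost N x = cost N y.
Proof. by move=> xy; apply: eq_bigr => g _; rewrite xy. Qed.

Lemma usageE x : usage N x = \sum_g x g * (fee N g)%:R.
Proof. by apply: eq_bigr => g _; rewrite mulrC. Qed.

Lemma costE x : cost N x = \sum_g x g * (cst N g)%:~R.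
Proof. by apply: eq_bigr => g _; rewrite mulrC. Qed.

Lemma usageD x y : usage N (fun g => x g + y g) = usage N x + usage N y.
Proof. by rewrite /usage -big_split; apply: eq_bigr => g _; rewrite mulrDr. Qed.

Lemma usageZ a x : usage N (fun g => a * x g) = a * usage N x.
Proof. by rewrite /usage mulr_sumr; apply: eq_bigr => g _; rewrite mulrCA. Qed.

Lemma usageB x y : usage N (fun g => x g - y g) = usage N x - usage N y.
Proof. by rewrite /usage -sumrB; apply: eq_bigr => g _; rewrite mulrBr. Qed.

Lemma costD x y : cost N (fun g => x g + y g) = cost N x + cost N y.
Proof. by rewrite /cost -big_split; apply: eq_bigr => g _; rewrite mulrDr. Qed.

Lemma costZ a x : cost N (fun g => a * x g) = a * cost N x.
Proof. by rewrite /cost mulr_sumr; apply: eq_bigr => g _; rewrite mulrCA. Qed.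

Lemma costB x y : cost N (fun g => x g - y g) = cost N x - cost N y.
Proof. by rewrite /cost -sumrB; apply: eq_bigr => g _; rewrite mulrBr. Qed.

End Linearity.

Section Basis.
Variables (R : realFieldType) (V E : finType) (N : net V E).
Variables (L T U : {set E}) (eb : E).
Hypothesis hB : is_basis N R (BS L T U eb).

Lemma basis_spanning_tree : spanning_tree N T.
Proof. by case: hB. Qed.

Lemma basis_partition h :
  [\/ h = eb /\ [&& h \notin L, h \notin T & h \notin U],
      h \in L /\ [&& h != eb, h \notin T & h \notin U],
      h \in T /\ [&& h != eb, h \notin L & h \notin U] |
      h \in U /\ [&& h != eb, h \notin L & h \notin T]].
Proof.
case: hB => [ebn /and3P[dLT dLU dTU] eq _ _].
have [->|hne] := eqVneq h eb.
  by apply: Or41; split => //; move: ebn; rewrite !inE !negb_or => /andP[/andP[-> ->] ->].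
have : h \in L :|: T :|: U by rewrite eq !inE hne.
rewrite !inE => /orP[/orP[hL|hT]|hU].
- by apply: Or42; rewrite hL (disjointFr dLT hL) (disjointFr dLU hL).
- by apply: Or43; rewrite hT (disjointFl dLT hT) (disjointFr dTU hT).
- by apply: Or44; rewrite hU (disjointFl dLU hU) (disjointFl dTU hU).
Qed.

Lemma upper_notin_lower f : f \in U -> f \notin L.
Proof. by case: hB => _ /and3P[_ dLU _] _ _ _ fU; rewrite (disjointFl dLU fU). Qed.

Lemma bar_notin_tree : eb \notin T.
Proof. by case: hB; rewrite !inE !negb_or => /andP[/andP[_ ->] _]. Qed.

(* The difference of two basic solutions vanishes off [T + eb], hence is a
   multiple of the cycle vector of [eb]; equal usage forces the multiple to be 0. *)
Lemma basic_sol_unique (x y : E -> R) :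
  basic_sol N (BS L T U eb) x -> basic_sol N (BS L T U eb) y -> x =1 y.
Proof.
have [_ _ _ sT [zb [[czb zb1 zb0] D0]]] := hB.
move=> [cx xL xU ux] [cy yL yU uy]; set t := x eb - y eb.
have w0 : forall g, x g - y g - t * zb g = 0.
  apply: (circulation_tree0 sT).
    by apply: conservationB; [apply: conservationB | apply: conservationZ].
  move=> h hT; have [[-> _]|[hL /and3P[hne _ _]]|[hT' _]|[hU /and3P[hne _ _]]] :=
    basis_partition h.
  - by rewrite zb1 mulr1 subrr.
  - by rewrite xL // yL // zb0 // mulr0 !subr0.
  - by rewrite hT' in hT.
  - by rewrite xU // yU // zb0 // mulr0 !subrr.
have xE g : x g = y g + t * zb g by apply/eqP; rewrite -subr_eq0 opprD addrA w0.
have : usage N x = usage N y + t * usage N zb.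
  by rewrite -usageZ -usageD; apply: eq_usage.
rewrite ux uy usageE => uxy.
have /eqP : t * \sum_g zb g * (fee N g)%:R = 0 by lra.
by rewrite mulf_eq0 (negbTE D0) orbF => /eqP t0 g; rewrite xE t0 mul0r addr0.
Qed.

(* [x - x eb * zb] is an integral circulation vanishing on [eb], and the
   half-integral budget [B + 1/2] then pins [2 * x eb * usage zb] to an integer. *)
Lemma basic_sol_half_int (x zb : E -> R) :
  is_cycvec N T eb zb -> basic_sol N (BS L T U eb) x -> forall g, is_int (2%:R * usage N zb * x g).
Proof.
move=> zbc [cx xL xU ux]; have zbS := is_sgn_cycvec basis_spanning_tree bar_notin_tree zbc.
case: zbc => czb zb1 zb0.
set q := fun g => x g - x eb * zb g.
have qZ : forall g, is_int (q g).
  apply: (circulation_tree_int basis_spanning_tree).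
    by apply: conservationB => //; apply: conservationZ.
  move=> h hT; rewrite /q.
  have [[-> _]|[hL /and3P[hne _ _]]|[hT' _]|[hU /and3P[hne _ _]]] := basis_partition h.
  - by rewrite zb1 mulr1 subrr; apply: is_int0.
  - by rewrite xL // zb0 // mulr0 subrr; apply: is_int0.
  - by rewrite hT' in hT.
  - by rewrite xU // zb0 // mulr0 subr0; apply: is_int_nat.
have xbZ : is_int (2%:R * usage N zb * x eb).
  have uq : usage N x = usage N q + x eb * usage N zb.
    by rewrite /q usageB usageZ subrK.
  have -> : 2%:R * usage N zb * x eb = 2%:R * (usage N x - usage N q) by rewrite uq; ring.
  rewrite ux mulrBr mulrDr mulfV ?pnatr_eq0 //.
  apply: is_intB; first by apply/is_intD/is_int1; apply: is_intM; apply: is_int_nat.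
  apply: is_intM; first exact: is_int_nat.
  by apply: is_int_sum => g _; apply: is_intM; [apply: is_int_nat | apply: qZ].
move=> g; have -> : 2%:R * usage N zb * x g =
    2%:R * usage N zb * q g + (2%:R * usage N zb * x eb) * zb g by rewrite /q; ring.
apply: is_intD; last exact/is_intM/is_sgn_int/zbS.
apply: is_intM => //; apply: is_intM; first exact: is_int_nat.
by apply: is_int_sum => h _; apply/is_intM/is_sgn_int/zbS; apply: is_int_nat.
Qed.

End Basis.

Section Bounds.
Variables (V E : finType) (N : net V E).

Lemma cap_le_Umax g : (cap N g <= Umax N)%N.
Proof. exact: (@leq_bigmax E (fun g => cap N g) g). Qed.

Lemma fee_le_Bmax g : (fee N g <= Bmax N)%N.
Proof. exact: (@leq_bigmax E (fun g => fee N g) g). Qed.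

Lemma cst_le_Cmax g : (absz (cst N g) <= Cmax N)%N.
Proof. exact: (@leq_bigmax E (fun g => absz (cst N g)) g). Qed.

Lemma cost_norm_le (R : realFieldType) (x : E -> R) :
  (forall f, 0 <= x f <= (cap N f)%:R) -> `|cost N x| <= (#|E| * Cmax N * Umax N)%:R.
Proof.
move=> fx; apply: le_trans (ler_norm_sum _ _ _) _.
rewrite -mulnA natrM -sum1_card natr_sum mulr_suml; apply: ler_sum => g _.
rewrite mul1r normrM natrM; have /andP[x0 xc] := fx g; apply: ler_pM => //.
  by rewrite -intr_norm -abszE pmulrn ler_nat cst_le_Cmax.
by rewrite ger0_norm //; apply: le_trans xc _; rewrite ler_nat cap_le_Umax.
Qed.

End Bounds.

Section Progress.
Variables (R : realFieldType) (V E : finType) (N : net V E).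

Definition basic_feasible (S : bstruct E) (x : E -> R) :=
  basic_sol N S x /\ forall f, 0 <= x f <= (cap N f)%:R.

Definition cost_progress (b : bool) (x x' : E -> R) :=
  if b then 1 <= (4 * #|V| ^ 2 * Bmax N ^ 2)%:R * (cost N x - cost N x') /\
    forall y, feasible_flow N y -> usage N y = (bud N)%:R + 2%:R^-1 ->
      cost N x - cost N y <=
        (4 * #|V| * #|E| * Umax N * Bmax N)%:R * (cost N x - cost N x')
  else cost N x' = cost N x.

End Progress.

Section Pivot.
Variables (R : realFieldType) (V E : finType) (N : net V E).
Variables (L T U : {set E}) (eb : E) (pi mu : V -> R) (x ze zb : E -> R) (e : E).
Local Notation S := (BS L T U eb).
Local Notation d := (redcost N S pi mu).
Implicit Types z : E -> R.
Hypotheses (hB : is_basis N R S)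
  (potT : forall g, g \in T -> cpi N pi g = 0 /\ bmu N mu g = 0)
  (bx : basic_sol N S x) (fx : forall f, 0 <= x f <= (cap N f)%:R)
  (zec : is_cycvec N T e ze) (zbc : is_cycvec N T eb zb)
  (ent : entering N S pi mu e)
  (dantzig : forall f, entering N S pi mu f -> `|d f| <= `|d e|).

Lemma cycvec_usage f z : is_cycvec N T f z -> usage N z = bmu N mu f.
Proof.
move=> zc; have [cz _ _] := zc.
rewrite usageE -(sum_circulation_reduced (fun g => (fee N g)%:R) mu cz).
by apply: (cycvec_sum zc) => g /potT[].
Qed.

Lemma cycvec_cost f z : is_cycvec N T f z -> cost N z = cpi N pi f.
Proof.
move=> zc; have [cz _ _] := zc.
rewrite costE -(sum_circulation_reduced (fun g => (cst N g)%:~R) pi cz).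
by apply: (cycvec_sum zc) => g /potT[].
Qed.

Lemma bmu_bar_neq0 : bmu N mu eb != 0.
Proof. by case: hB => _ _ _ _ [z [zc]]; rewrite -usageE (cycvec_usage zc). Qed.

Lemma redcost_tree g : g \in T -> d g = 0.
Proof. by move=> /potT[cg bg]; rewrite /redcost /= cg bg mulr0 mul0r subr0. Qed.

Lemma redcost_bar : d eb = 0.
Proof. by rewrite /redcost /= mulfK ?bmu_bar_neq0 // subrr. Qed.

Lemma entering_nonbasic : [/\ e \notin T, e != eb & (e \in L) || (e \in U)].
Proof.
have [[ee _]|[eL /and3P[]]|[_ /and3P[_ eL eU]]|[eU /and3P[]]] := basis_partition hB e.
- by case: ent => -[_]; rewrite ee redcost_bar ltxx.
- by rewrite eL.
- by case: ent => -[]; rewrite ?(negbTE eL) ?(negbTE eU).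
- by rewrite eU orbT.
Qed.

Lemma cost_redcost w : conservation N w -> usage N w = 0 ->
  cost N w = \sum_g w g * d g.
Proof.
move=> cw uw; rewrite costE -(sum_circulation_reduced (fun g => (cst N g)%:~R) pi cw).
have -> : \sum_g w g * d g = \sum_g w g * cpi N pi g -
    cpi N pi eb / bmu N mu eb * \sum_g w g * bmu N mu g.
  by rewrite mulr_sumr -sumrB; apply: eq_bigr => g _; rewrite /redcost /=; ring.
by rewrite (sum_circulation_reduced (fun g => (fee N g)%:R) mu cw) -usageE uw mulr0 subr0.
Qed.

Lemma bmu_cycvec_le f z : f \notin T -> is_cycvec N T f z ->
  `|bmu N mu f| <= #|V|%:R * (Bmax N)%:R.
Proof.
move=> fT zc; have sT := basis_spanning_tree hB.
have cardA : #|f |: T| = #|V|.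
  have n0 : (0 < #|V|)%N by apply/card_gt0P; exists (src N f).
  by case/andP: sT => _ /eqP cT; rewrite cardsU1 fT cT add1n prednK.
rewrite -(cycvec_usage zc) usageE -cardA; apply: norm_sum_support_le.
- by case: zc => _ _ z0 g; rewrite !inE negb_or => /andP[gf gT]; apply: z0.
- by move=> g; apply/is_sgn_norm_le1/(is_sgn_cycvec sT fT zc).
- by move=> g; rewrite ger0_norm // ler_nat fee_le_Bmax.
Qed.

Lemma is_int_bmu_cycvec f z : f \notin T -> is_cycvec N T f z -> is_int (bmu N mu f).
Proof.
move=> fT zc; have zS := is_sgn_cycvec (basis_spanning_tree hB) fT zc.
rewrite -(cycvec_usage zc); apply: is_int_sum => g _.
by apply: is_intM; [apply: is_int_nat | apply/is_sgn_int/zS].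
Qed.

Lemma is_int_cpi_cycvec f z : f \notin T -> is_cycvec N T f z -> is_int (cpi N pi f).
Proof.
move=> fT zc; have zS := is_sgn_cycvec (basis_spanning_tree hB) fT zc.
rewrite -(cycvec_cost zc); apply: is_int_sum => g _.
by apply: is_intM; [apply: is_int_intr | apply/is_sgn_int/zS].
Qed.

(* Clearing the denominator [bmu eb] of [d e] leaves a nonzero integer. *)
Lemma redcost_entering_ge : 1 <= #|V|%:R * (Bmax N)%:R * `|d e|.
Proof.
have [eT _ _] := entering_nonbasic; have ebT := bar_notin_tree hB.
have de0 : d e != 0 by case: ent => -[_ h]; [rewrite lt_eqF | rewrite gt_eqF].
have : 1 <= `|bmu N mu eb * d e|.
  apply: is_int_norm_ge1; last by rewrite mulf_neq0 ?bmu_bar_neq0.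
  have -> : bmu N mu eb * d e = bmu N mu eb * cpi N pi e - cpi N pi eb * bmu N mu e.
    by rewrite /redcost /=; field; apply: bmu_bar_neq0.
  by apply: is_intB; apply: is_intM;
    by [apply: is_int_bmu_cycvec zbc | apply: is_int_cpi_cycvec zec |
        apply: is_int_cpi_cycvec zbc | apply: is_int_bmu_cycvec zec].
rewrite normrM => /le_trans; apply; apply: ler_wpM2r => //.
exact: bmu_cycvec_le zbc.
Qed.

Lemma card_lt_entering : (#|V| < #|E|)%N.
Proof.
have [eT eeb _] := entering_nonbasic; have ebT := bar_notin_tree hB.
have n0 : (0 < #|V|)%N by apply/card_gt0P; exists (src N e).
case/andP: (basis_spanning_tree hB) => _ /eqP cT.
have := max_card (e |: (eb |: T)); rewrite !cardsU1 !inE negb_or eeb eT ebT cT /=.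
lia.
Qed.

(* Dantzig's rule: each term of [\sum_g (y - x) g * d g] is at least [- Umax * |d e|]. *)
Lemma optimality_gap_le (y : E -> R) :
  feasible_flow N y -> usage N y = (bud N)%:R + 2%:R^-1 ->
  cost N x - cost N y <= (#|E| * Umax N)%:R * `|d e|.
Proof.
move=> [cy fy] uy; case: bx => cx xL xU ux.
have gap : cost N y - cost N x = \sum_g (y g - x g) * d g.
  rewrite -costB cost_redcost //; first exact: conservationB.
  by rewrite usageB uy ux subrr.
have lb g : - ((Umax N)%:R * `|d e|) <= (y g - x g) * d g.
  have Ude : 0 <= (Umax N)%:R * `|d e| by apply: mulr_ge0.
  have /andP[y0 yc] := fy g; have capU : (cap N g)%:R <= (Umax N)%:R :> R.
    by rewrite ler_nat cap_le_Umax.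
  have [[->]|[gL _]|[gT _]|[gU _]] := basis_partition hB g.
  - by rewrite redcost_bar mulr0 oppr_le0.
  - rewrite xL // subr0; have [dg|dg] := leP 0 (d g).
      by apply: le_trans (mulr_ge0 y0 dg); rewrite oppr_le0.
    have : `|d g| <= `|d e| by apply: dantzig; left.
    by rewrite ltr0_norm // => h; nra.
  - by rewrite (redcost_tree gT) mulr0 oppr_le0.
  - rewrite xU //; have [dg|dg] := leP (d g) 0.
      by apply: le_trans (_ : 0 <= _); [rewrite oppr_le0 | nra].
    have : `|d g| <= `|d e| by apply: dantzig; right.
    by rewrite gtr0_norm // => h; nra.
have : \sum_(g : E) - ((Umax N)%:R * `|d e|) <= cost N y - cost N x.
  by rewrite gap; apply: ler_sum => g _; apply: lb.
by rewrite sumr_const mulNrn -mulr_natl natrM -mulrA => h; lra.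
Qed.

Definition pivot_dir f : R :=
  (if e \in L then 1 else -1) * (ze f - bmu N mu e / bmu N mu eb * zb f).

Lemma pivot_dir_circulation : conservation N pivot_dir.
Proof.
case: zec zbc => cze _ _ [czb _ _].
by apply: conservationZ; apply: conservationB => //; apply: conservationZ.
Qed.

Lemma usage_pivot_dir : usage N pivot_dir = 0.
Proof.
rewrite usageZ usageB usageZ (cycvec_usage zec) (cycvec_usage zbc).
by rewrite divfK ?bmu_bar_neq0 // subrr mulr0.
Qed.

Lemma pivot_dir_entering : pivot_dir e = if e \in L then 1 else -1.
Proof.
case: zec zbc => _ ze1 _ [_ _ zb0]; have [eT eb_e _] := entering_nonbasic.
by rewrite /pivot_dir ze1 zb0 // mulr0 subr0 mulr1.
Qed.

Lemma pivot_dir_nonbasic f : (f \in L) || (f \in U) -> f != e -> pivot_dir f = 0.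
Proof.
case: zec zbc => _ _ ze0 [_ _ zb0].
case: (basis_partition hB f) =>
  [[-> /and3P[bL _ bU]]|[_ /and3P[fb fT _]]|[fT /and3P[_ fL fU]]|[_ /and3P[fb _ fT]]] fLU fe.
- by rewrite (negbTE bL) (negbTE bU) in fLU.
- by rewrite /pivot_dir ze0 // zb0 // mulr0 subrr mulr0.
- by rewrite (negbTE fL) (negbTE fU) in fLU.
- by rewrite /pivot_dir ze0 // zb0 // mulr0 subrr mulr0.
Qed.

(* Along [pivot_dir] only the entering edge has a nonzero reduced cost, and the
   sign is chosen so that the cost decreases. *)
Lemma cost_pivot_dir : cost N pivot_dir = - `|d e|.
Proof.
rewrite (cost_redcost pivot_dir_circulation usage_pivot_dir) (bigD1 e) //=.
rewrite pivot_dir_entering big1 ?addr0 => [|g ge]; last first.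
  have [[->]|[gL _]|[gT _]|[gU _]] := basis_partition hB g.
  - by rewrite redcost_bar mulr0.
  - by rewrite pivot_dir_nonbasic ?gL // mul0r.
  - by rewrite redcost_tree // mulr0.
  - by rewrite pivot_dir_nonbasic ?gU ?orbT // mul0r.
case: ent => -[eI dI]; first by rewrite eI mul1r ltr0_norm // opprK.
by rewrite (negbTE (upper_notin_lower hB eI)) mulN1r gtr0_norm.
Qed.

Section Step.
Variable e' : E.

Definition pivot_step : R := delta_f N x pivot_dir e'.
Definition pivot_flow f : R := x f + pivot_step * pivot_dir f.

Hypotheses (dir_e' : pivot_dir e' != 0)
  (step_min : forall f, pivot_dir f != 0 -> pivot_step <= delta_f N x pivot_dir f).

Lemma pivot_step_ge0 : 0 <= pivot_step.
Proof.
have /andP[x0 xc] := fx e'; rewrite /pivot_step /delta_f; case: ifP => dneg.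
  by rewrite mulNr -mulrN -invrN divr_ge0 // oppr_ge0 ltW.
by rewrite divr_ge0 ?subr_ge0 // leNgt dneg.
Qed.

Lemma pivot_flow_bounded f : 0 <= pivot_flow f <= (cap N f)%:R.
Proof.
have /andP[x0 xc] := fx f; have s0 := pivot_step_ge0; rewrite /pivot_flow.
have [->|dn0] := eqVneq (pivot_dir f) 0; first by rewrite mulr0 addr0 x0 xc.
have := step_min dn0; rewrite /delta_f; case: ifP => dneg smin.
  have : - x f / pivot_dir f * pivot_dir f <= pivot_step * pivot_dir f.
    by apply: ler_wnM2r => //; apply: ltW.
  rewrite divfK // => h; have : pivot_step * pivot_dir f <= 0.
    by apply: mulr_ge0_le0 => //; apply: ltW.
  by move=> h'; apply/andP; split; lra.
have dpos : 0 < pivot_dir f by rewrite lt_def dn0 leNgt dneg.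
have : pivot_step * pivot_dir f <= ((cap N f)%:R - x f) / pivot_dir f * pivot_dir f.
  by apply: ler_wpM2r => //; apply: ltW.
rewrite divfK // => h; have : 0 <= pivot_step * pivot_dir f.
  by apply: mulr_ge0 => //; apply: ltW.
by move=> h'; apply/andP; split; lra.
Qed.

Lemma pivot_flow_cost : cost N pivot_flow = cost N x - pivot_step * `|d e|.
Proof. by rewrite costD costZ cost_pivot_dir mulrN. Qed.

Lemma pivot_flow_leaving :
  pivot_flow e' = if pivot_dir e' < 0 then 0 else (cap N e')%:R.
Proof.
by rewrite /pivot_flow /pivot_step /delta_f; case: ifP => _; rewrite divfK //; ring.
Qed.

Lemma pivot_flow_basic S' : new_tuple N S e e' pivot_flow S' -> basic_sol N S' pivot_flow.
Proof.
case: bx => cx xL xU ux.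
have basic (L' T' U' : {set E}) (eb' : E) :
    (forall f, f \in L' -> pivot_flow f = 0) ->
    (forall f, f \in U' -> pivot_flow f = (cap N f)%:R) ->
    basic_sol N (BS L' T' U' eb') pivot_flow.
  move=> h0 hc; split=> //; rewrite /pivot_flow.
    by apply: conservationD => //; apply/conservationZ/pivot_dir_circulation.
  by rewrite usageD usageZ usage_pivot_dir mulr0 addr0.
have lowerL f : f \in L :\ e -> pivot_flow f = 0.
  rewrite !inE => /andP[fe fL].
  by rewrite /pivot_flow pivot_dir_nonbasic ?fL // mulr0 addr0 xL.
have upperU f : f \in U :\ e -> pivot_flow f = (cap N f)%:R.
  rewrite !inE => /andP[fe fU].
  by rewrite /pivot_flow pivot_dir_nonbasic ?fU ?orbT // mulr0 addr0 xU.
have lower_leaving (A : {set E}) : (forall f, f \in A -> pivot_flow f = 0) ->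
    pivot_flow e' == 0 -> forall f, f \in e' |: A -> pivot_flow f = 0.
  by move=> hA /eqP h0 f; rewrite !inE => /orP[/eqP->|/hA].
have upper_leaving (A : {set E}) : (forall f, f \in A -> pivot_flow f = (cap N f)%:R) ->
    pivot_flow e' != 0 -> forall f, f \in e' |: A -> pivot_flow f = (cap N f)%:R.
  move=> hA h0 f; rewrite !inE => /orP[/eqP->|/hA //].
  by move: h0; rewrite pivot_flow_leaving; case: ifP => //; rewrite eqxx.
rewrite /new_tuple; have [ee|ene] := eqVneq e' e.
  have dir_e : pivot_dir e' = if e \in L then 1 else -1 by rewrite ee pivot_dir_entering.
  case: ifP => eL ->; apply: basic => // f; rewrite !inE.
  - case/orP=> [/eqP->|fU]; first by rewrite -ee pivot_flow_leaving dir_e eL ltNge ler01.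
    apply: upperU; rewrite !inE fU andbT; apply: contraTneq fU => ->.
    by apply: contraL eL; move/(upper_notin_lower hB).
  - case/orP=> [/eqP->|fL]; first by rewrite -ee pivot_flow_leaving dir_e eL ltrN10.
    by apply: lowerL; rewrite !inE fL andbT; apply: contraTneq fL => ->; rewrite eL.
have [eeb|_] := eqVneq e' eb; [rewrite -eeb => -> | case=> -[_ ->]];
  case: eqP => h; apply: basic;
  by [apply: lower_leaving lowerL _; apply/eqP | apply: upperU | apply: lowerL |
      apply: upper_leaving upperU _; apply/eqP].
Qed.

(* [pivot_step = s / |pivot_dir e'|] where [2 * bmu eb * s] is a nonzero integer
   (half-integrality of basic solutions) and [|pivot_dir e' * bmu eb| <= 2 n Bmax]. *)
Lemma pivot_step_ge : 0 < pivot_step -> 1 <= 4%:R * #|V|%:R * (Bmax N)%:R * pivot_step.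
Proof.
move=> step_gt0; have ebT := bar_notin_tree hB; have [eT _ _] := entering_nonbasic.
set nB : R := #|V|%:R * (Bmax N)%:R.
set s := if pivot_dir e' < 0 then x e' else (cap N e')%:R - x e'.
have stepE : pivot_step = s / `|pivot_dir e'|.
  rewrite /pivot_step /delta_f /s; case: ifP => dneg.
    by rewrite ltr0_norm // invrN mulrN mulNr.
  by rewrite gtr0_norm // lt_def dir_e' leNgt dneg.
have bZ := is_int_bmu_cycvec ebT zbc.
have sZ : is_int (2%:R * bmu N mu eb * s).
  have := basic_sol_half_int hB zbc bx; rewrite (cycvec_usage zbc) /s => half.
  case: ifP => _ //; rewrite mulrBr; apply: is_intB => //.
  by apply: is_intM; [apply: is_intM; [apply: is_int_nat | apply: bZ] | apply: is_int_nat].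
have dir_le : `|pivot_dir e' * bmu N mu eb| <= 2%:R * nB.
  have -> : pivot_dir e' * bmu N mu eb = (if e \in L then 1 else -1) *
      (ze e' * bmu N mu eb - bmu N mu e * zb e').
    by rewrite /pivot_dir; field; apply: bmu_bar_neq0.
  rewrite normrM (_ : `|_| = 1); last by case: ifP; rewrite ?normrN normr1.
  rewrite mul1r; apply: le_trans (ler_normB _ _) _; rewrite !normrM.
  have := is_sgn_norm_le1 (is_sgn_cycvec (basis_spanning_tree hB) eT zec e').
  have := is_sgn_norm_le1 (is_sgn_cycvec (basis_spanning_tree hB) ebT zbc e').
  have := bmu_cycvec_le ebT zbc; have := bmu_cycvec_le eT zec.
  have := normr_ge0 (ze e'); have := normr_ge0 (zb e').
  have := normr_ge0 (bmu N mu eb); have := normr_ge0 (bmu N mu e).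
  rewrite -/nB; nra.
have s_gt0 : 0 < s by move: step_gt0; rewrite stepE pmulr_lgt0 // invr_gt0 normr_gt0.
have : 1 <= `|2%:R * bmu N mu eb * s|.
  by apply: is_int_norm_ge1 => //; rewrite !mulf_neq0 ?pnatr_eq0 ?bmu_bar_neq0 ?gt_eqF.
have -> : `|2%:R * bmu N mu eb * s| = 2%:R * pivot_step * `|pivot_dir e' * bmu N mu eb|.
  rewrite stepE; have := dir_e'; move: (pivot_dir e') => t t0.
  by rewrite !normrM (ger0_norm (ltW s_gt0)) normr_nat; field; rewrite normr_eq0.
move=> /le_trans; apply.
have -> : 4%:R * #|V|%:R * (Bmax N)%:R * pivot_step = 2%:R * pivot_step * (2%:R * nB).
  by rewrite /nB; ring.
by apply: ler_wpM2l dir_le; rewrite mulr_ge0 // ltW.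
Qed.

Lemma pivot_progress S' (b : bool) :
  new_tuple N S e e' pivot_flow S' -> b = (0 < pivot_step) ->
  exists2 x', basic_feasible N S' x' & cost_progress N b x x'.
Proof.
move=> nt ->; exists pivot_flow.
  by split; [apply: pivot_flow_basic | apply: pivot_flow_bounded].
rewrite /cost_progress pivot_flow_cost (_ : cost N x - _ = pivot_step * `|d e|); last by ring.
have [step_gt0|step_le0] := ltrP 0 pivot_step; last first.
  have -> : pivot_step = 0 by apply/eqP; rewrite eq_le step_le0 pivot_step_ge0.
  by rewrite mul0r subr0.
have step_ge := pivot_step_ge step_gt0; have de_ge := redcost_entering_ge.
split.
  rewrite [X in _ <= X](_ : _ = (4%:R * #|V|%:R * (Bmax N)%:R * pivot_step) *
    (#|V|%:R * (Bmax N)%:R * `|d e|)); last by ring.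
  by have := ler_pM ler01 ler01 step_ge de_ge; rewrite mulr1.
move=> y fy uy; apply: le_trans (optimality_gap_le fy uy) _.
rewrite [X in _ <= X](_ : _ = ((#|E| * Umax N)%:R * `|d e|) *
  (4%:R * #|V|%:R * (Bmax N)%:R * pivot_step)); last by rewrite !natrM; ring.
by rewrite -[X in X <= _]mulr1; apply: ler_wpM2l => //; apply: mulr_ge0.
Qed.

End Step.

End Pivot.

Section DantzigPivot.
Variables (R : realFieldType) (V E : finType) (N : net V E) (vr : V).

Lemma dantzig_pivot_progress S S' (b : bool) (x0 : E -> R) :
  dantzig_pivot N R vr S S' b -> basic_feasible N S x0 ->
  exists2 x', basic_feasible N S' x' & cost_progress N b x0 x'.
Proof.
case: S => L T U eb [hB [pi [mu [x [ze [zb [e [e' [[[_ _ potT] bx zec zbc] ent dantzig]]]]]]]]].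
move=> [dir_e' step_min nt bE] [bx0 fx0].
have xx0 := basic_sol_unique hB bx bx0.
have fx f : 0 <= x f <= (cap N f)%:R by rewrite xx0.
have [x' hx' advance] :=
  pivot_progress hB potT bx fx zec zbc ent dantzig dir_e' step_min nt bE.
by exists x'; move: advance; rewrite /cost_progress (eq_cost N xx0).
Qed.

Lemma dantzig_pivot_card S S' (b : bool) : dantzig_pivot N R vr S S' b -> (#|V| < #|E|)%N.
Proof.
case: S => L T U eb [hB [pi [mu [x [ze [zb [e [e' [[[_ _ potT] _ _ _] ent _ _]]]]]]]]].
exact: card_lt_entering hB potT ent.
Qed.

End DantzigPivot.

Section GeometricDecay.
Variable R : realFieldType.

Lemma bernoulli_le (q : R) (n : nat) : 0 <= q -> 1 + n%:R * q <= (1 + q) ^+ n.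
Proof.
move=> q0; elim: n => [|n IH]; first by rewrite mul0r addr0 expr0.
rewrite exprSr -natr1; apply: le_trans (_ : (1 + n%:R * q) * (1 + q) <= _).
  have : 0 <= n%:R * q * q by rewrite !mulr_ge0.
  nra.
by apply: ler_wpM2r => //; rewrite addr_ge0.
Qed.

Lemma one_sub_inv_ge0 (M : nat) : 0 <= 1 - M%:R^-1 :> R.
Proof.
have [->|M_gt0] := posnP M; first by rewrite invr0 subr0.
by rewrite subr_ge0 invf_le1 ?ler1n ?ltr0n.
Qed.

(* [(1 - q) ^+ M * (1 + q) ^+ M <= 1] and [(1 + q) ^+ M >= 2] for [q = 1/M]. *)
Lemma one_sub_inv_expr_le (M : nat) : (0 < M)%N -> (1 - M%:R^-1) ^+ M <= 2%:R^-1 :> R.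
Proof.
move=> M_gt0; set q : R := M%:R^-1.
have q0 : 0 <= q by rewrite invr_ge0.
have q1 : q <= 1 by rewrite invf_le1 ?ler1n ?ltr0n.
have two_le : 2%:R <= (1 + q) ^+ M.
  by have := bernoulli_le M q0; rewrite mulfV ?pnatr_eq0 -?lt0n.
have prod_le : (1 - q) ^+ M * (1 + q) ^+ M <= 1 by rewrite -exprMn exprn_ile1; nra.
rewrite -div1r ler_pdivlMr ?ltr0n //; apply: le_trans prod_le.
by apply: ler_wpM2l => //; apply: exprn_ge0; lra.
Qed.

(* Decay by a factor [1 - 1/M] per step leaves at most [2^-L] after [M * L] steps. *)
Lemma geometric_count_lt (Q G M L c : nat) : (0 < M)%N -> (Q * G < 2 ^ L)%N ->
  1 <= Q%:R * ((1 - M%:R^-1) ^+ c * G%:R) :> R -> (c < M * L)%N.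
Proof.
move=> M_gt0 QG_lt one; rewrite ltnNge; apply/negP => MLc.
have decay : (1 - M%:R^-1) ^+ c <= (2%:R^-1) ^+ L :> R.
  apply: le_trans (_ : (1 - M%:R^-1) ^+ (M * L) <= _).
    by apply: ler_wiXn2l => //; [apply: one_sub_inv_ge0 | rewrite lerBlDr lerDl invr_ge0].
  rewrite exprM; apply: lerXn2r; rewrite ?nnegrE ?exprn_ge0 ?invr_ge0 ?one_sub_inv_ge0 //.
  exact: one_sub_inv_expr_le.
have : 1 <= (2%:R ^+ L)^-1 * (Q * G)%:R :> R.
  apply: le_trans one _.
  have -> : (2%:R ^+ L)^-1 * (Q * G)%:R = Q%:R * ((2%:R^-1) ^+ L * G%:R) :> R.
    by rewrite natrM exprVn; ring.
  by apply: ler_wpM2l => //; apply: ler_wpM2r.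
rewrite mulrC ler_pdivlMr ?exprn_gt0 ?ltr0n // mul1r -natrX ler_nat.
by rewrite leqNgt QG_lt.
Qed.

End GeometricDecay.

(* With [n <= m <= P] and [B <= P] for [P = m C U B <= 2^u], the product is at
   most [8 P^3 < 2^(8u)]. *)
Lemma up_log_bound (n m C U B : nat) : (n <= m)%N -> (2 <= m)%N ->
  (0 < C)%N -> (0 < U)%N -> (0 < B)%N ->
  (4 * n ^ 2 * B ^ 2 * (2 * (m * C * U)) < 2 ^ (8 * up_log 2 (m * C * U * B)))%N.
Proof.
move=> nm m2 C0 U0 B0; set P := (m * C * U * B)%N.
have := @up_logP 2 P isT; set u := up_log 2 P; set a := (2 ^ u)%N => Pa.
have mCU : (m <= m * C * U)%N by rewrite -mulnA leq_pmulr // muln_gt0 C0 U0.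
have mP : (m <= P)%N by apply: leq_trans mCU _; rewrite leq_pmulr.
have mBP : (m * B <= P)%N by apply: leq_mul.
have a2 : (2 <= a)%N by lia.
rewrite [(8 * u)%N]mulnC expnM -/a.
have na : (n <= a)%N by lia.
have nBa : (n * B <= a)%N.
  by apply: leq_trans Pa; apply: leq_trans mBP; rewrite leq_mul2r nm orbT.
apply: (@leq_ltn_trans (8 * (a * a * a))).
  rewrite (_ : 4 * n ^ 2 * B ^ 2 * _ = 8 * (n * (n * B) * P))%N; last by rewrite /P; lia.
  by rewrite leq_mul2l /= leq_mul ?leq_mul.
have a5 : (2 ^ 5 <= a ^ 5)%N by rewrite leq_exp2r.
rewrite (_ : a ^ 8 = a ^ 5 * (a * a * a))%N; last by rewrite !expnS expn0 !muln1; lia.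
by rewrite ltn_pmul2r ?muln_gt0 //; lia.
Qed.

Lemma exists_prefix_count (b : nat -> bool) k t : (t <= \sum_(i < k) b i)%N ->
  exists2 j, (j <= k)%N & (\sum_(i < j) b i)%N = t.
Proof.
elim: k t => [|k IH] t.
  by rewrite big_ord0 leqn0 => /eqP->; exists 0%N; rewrite ?big_ord0.
rewrite big_ord_recr /= => t_le.
have [t_le'|t_gt] := leqP t (\sum_(i < k) b i).
  by have [j jk <-] := IH t t_le'; exists j => //; apply: leqW.
by exists k.+1 => //; rewrite big_ord_recr /=; move: t_le t_gt; case: (b k) => /=; lia.
Qed.

Section Run.
Variables (R : realFieldType) (V E : finType) (N : net V E) (vr : V).
Variables (k : nat) (Ss : nat -> bstruct E) (nd : nat -> bool).
Hypothesis run : dantzig_run N R vr k Ss nd.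

Local Notation count j := (\sum_(i < j) nd i)%N.
Local Notation Q := (4 * #|V| ^ 2 * Bmax N ^ 2)%N.
Local Notation M := (4 * #|V| * #|E| * Umax N * Bmax N)%N.
Local Notation G := (2 * (#|E| * Cmax N * Umax N))%N.

Lemma run_basis j : (j <= k)%N -> is_basis N R (Ss j).
Proof.
case: run => _ piv [final _]; rewrite leq_eqVlt => /orP[/eqP-> // | jk].
by case: (piv j jk).
Qed.

Lemma run_basic_feasible j : (j <= k)%N -> exists x : E -> R, basic_feasible N (Ss j) x.
Proof.
elim: j => [_|j IH jk]; first by case: run => -[_ [x [bx fx]]] _ _; exists x.
have [x hx] := IH (ltnW jk); case: run => _ piv _.
by have [x' hx' _] := dantzig_pivot_progress (piv j jk) hx; exists x'.
Qed.

Lemma run_basic_unique j (x x' : E -> R) : (j <= k)%N ->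
  basic_feasible N (Ss j) x -> basic_feasible N (Ss j) x' -> x =1 x'.
Proof.
move=> /run_basis; case: (Ss j) => L T U eb hB [bx _] [bx' _].
exact: (basic_sol_unique hB bx bx').
Qed.

Lemma run_step j (x x' : E -> R) : (j < k)%N ->
  basic_feasible N (Ss j) x -> basic_feasible N (Ss j.+1) x' -> cost_progress N (nd j) x x'.
Proof.
move=> jk hx hx'; case: run => _ piv _.
have [x'' hx'' advance] := dantzig_pivot_progress (piv j jk) hx.
by rewrite /cost_progress (eq_cost N (run_basic_unique jk hx' hx'')).
Qed.

Section Final.
Variable y : E -> R.
Hypothesis y_final : basic_feasible N (Ss k) y.

Lemma run_gap_le j x : (j <= k)%N -> basic_feasible N (Ss j) x ->
  cost N x - cost N y <= (1 - M%:R^-1) ^+ count j * G%:R.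
Proof.
have [[cy _ _ uy] fy] := y_final.
elim: j x => [|j IH] x jk hx.
  rewrite big_ord0 expr0 mul1r natrM.
  have := cost_norm_le fy; have := cost_norm_le hx.2.
  by rewrite !ler_norml => /andP[? ?] /andP[? ?]; lra.
have [x0 hx0] := run_basic_feasible (ltnW jk).
have gap0 := IH x0 (ltnW jk) hx0.
have := run_step jk hx0 hx; rewrite /cost_progress big_ord_recr /=.
case: (nd j) => [[Q_le gap_le] | ->]; last by rewrite addn0.
set del := cost N x0 - cost N x in Q_le gap_le *.
have gap_del := gap_le y (conj cy fy) uy.
have del_ge0 : 0 <= del.
  rewrite leNgt; apply/negP => del_lt0.
  have : Q%:R * del <= 0 by apply: mulr_ge0_le0 => //; apply: ltW.
  lra.
rewrite addn1 exprS -mulrA.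
apply: le_trans (_ : _ <= (1 - M%:R^-1) * (cost N x0 - cost N y)) _; last first.
  by apply: ler_wpM2l => //; apply: one_sub_inv_ge0.
have : M%:R^-1 * (cost N x0 - cost N y) <= del.
  have [M0|M_gt0] := posnP M; first by rewrite M0 invr0 mul0r.
  by rewrite mulrC ler_pdivrMr ?ltr0n // mulrC.
rewrite /del; lra.
Qed.

(* Every non-degenerate pivot lowers the cost by at least [1/Q]. *)
Lemma run_count_le d j x : (j + d = k)%N -> basic_feasible N (Ss j) x ->
  (count k)%:R <= (count j)%:R + Q%:R * (cost N x - cost N y) :> R.
Proof.
elim: d j x => [|d IH] j x jdk hx.
  rewrite addn0 in jdk; subst j.
  by rewrite (eq_cost N (run_basic_unique (leqnn k) hx y_final)) subrr mulr0 addr0.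
have jk : (j < k)%N by lia.
have [x' hx'] := run_basic_feasible jk.
have := IH j.+1 x' (etrans (addSnnS j d) jdk) hx'; have := run_step jk hx hx'.
rewrite /cost_progress big_ord_recr /= natrD; case: (nd j) => [[Q_le _]|->] /=; first lra.
by rewrite addr0.
Qed.

End Final.

Lemma run_count_bound : (count k <= 32 * (#|V| * #|E| * Umax N * Bmax N *
    up_log 2 (#|E| * Cmax N * Umax N * Bmax N)))%N.
Proof.
have [->|cnt_gt0] := posnP (count k); first by [].
have k_gt0 : (0 < k)%N by move: cnt_gt0; case: (posnP k) => [->|//]; rewrite big_ord0.
have nm : (#|V| < #|E|)%N.
  by case: run => _ piv _; apply: dantzig_pivot_card (piv 0%N k_gt0).
have [y hy] := run_basic_feasible (leqnn k).
have [j jk cj] := exists_prefix_count (leq_pred (count k)).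
have [x hx] := run_basic_feasible jk.
have := run_gap_le hy jk hx; have := run_count_le hy (subnKC jk) hx.
rewrite cj => cnt gap.
have one : 1 <= Q%:R * ((1 - M%:R^-1) ^+ (count k).-1 * G%:R) :> R.
  rewrite -(prednK cnt_gt0) -natr1 in cnt.
  by apply: le_trans (ler_wpM2l (ler0n _ _) gap); lra.
have QG_gt0 : (0 < Q * G)%N.
  by rewrite lt0n; apply/eqP => QG0; move: one; rewrite mulrCA -natrM QG0 mulr0 ler10.
move: (QG_gt0); rewrite !muln_gt0 /=.
case/and3P=> /and3P[/andP[n_gt0 _] B_gt0 _] /andP[_ C_gt0] U_gt0.
have QG_lt := up_log_bound (ltnW nm) (leq_ltn_trans n_gt0 nm) C_gt0 U_gt0 B_gt0.
have M_gt0 : (0 < M)%N by rewrite !muln_gt0 n_gt0 (ltn_trans n_gt0 nm) U_gt0 B_gt0.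
have := geometric_count_lt M_gt0 QG_lt one.
rewrite (_ : 32 * _ = M * (8 * up_log 2 (#|E| * Cmax N * Umax N * Bmax N)))%N;
  last by ring.
by move=> lt; rewrite -(prednK cnt_gt0).
Qed.

End Run.

Local Close Scope ring_scope.

(* Strong connectivity and the budget condition on optimal flows only matter for
   the existence of a run; the bound holds for every run. *)
Theorem lemma6 : exists K : nat,
  forall (R : realFieldType) (V E : finType) (N : net V E),
  strongly_connected N ->
  (exists x : E -> R, [/\ feasible_flow N x,
       (forall y : E -> R, feasible_flow N y -> (cost N x <= cost N y)%R) &
       ((bud N)%:R + 1 <= usage N x)%R]) ->
  forall (vr : V) (k : nat) (Ss : nat -> bstruct E) (nd : nat -> bool),
  dantzig_run N R vr k Ss nd ->
  (\sum_(i < k) nd i <=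
     K * (n_of V * m_of E * Umax N * Bmax N * up_log 2 (m_of E * Cmax N * Umax N * Bmax N)))%N.
Proof.
exists 32 => R V E N _ _ vr k Ss nd run.
exact: run_count_bound run.
Qed.
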